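(* Let $(a_n)_{n\ge0}$ be the sequence $a_0=1$, $a_1=1$, $a_n=2a_{n-1}+a_{n-2}$ for $n\ge2$ (so $a=(1,1,3,7,17,41,\ldots)$, the numerators of the continued fraction convergents to $\sqrt2$). Then for all $n\ge0$, $a_n=\sum_{i=0}^n\binom{n}{i}(-1)^i2^{n-i}a_i$, and for all $n\ge1$, $$\sum_{i=0}^{n-1}\binom{n}{i}(-1)^i2^{n-i}a_i=\begin{cases}0,& n\text{ even},\\ 2a_n,& n\text{ odd}.\end{cases}$$ *)

From mathcomp Require Import all_boot all_order all_algebra.
Set Implicit Arguments. Unset Strict Implicit. Unset Printing Implicit Defensive.
Import GRing.Theory Num.Theory.
Local Open Scope ring_scope.

Fixpoint a (n : nat) : int :=
  match n with
  | 0%N => 1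
  | 1%N => 1
  | (m.+1 as k).+1 => 2 * a k + a m
  end.

From mathcomp Require Import all_boot all_order all_algebra.
From mathcomp Require Import algC ring.
Set Implicit Arguments. Unset Strict Implicit. Unset Printing Implicit Defensive.
Import GRing.Theory Num.Theory.
Local Open Scope ring_scope.

(* The roots 1 +- sqrt 2 of X^2 - 2X - 1 satisfy 2 - (1 +- sqrt 2) = 1 -+ sqrt 2, so the
   binomial transform sum_i C(n,i) (-1)^i 2^(n-i) x^i = (2 - x)^n swaps the two terms of the
   closed form 2 a_n = (1 + sqrt 2)^n + (1 - sqrt 2)^n and hence fixes a_n.  Isolating the
   last term (-1)^n a_n of the sum gives the second identity. *)

Lemma sum_binomial_signed (R : comPzRingType) (c x : R) n :
  \sum_(i < n.+1) 'C(n, i)%:R * (-1) ^+ i * c ^+ (n - i) * x ^+ i = (c - x) ^+ n.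
Proof.
rewrite exprDn; apply: eq_bigr => i _.
by rewrite -[RHS]mulr_natl (exprNn x); ring.
Qed.

Section ClosedForm.

Variables (R : comPzRingType) (s : R).
Hypothesis s_sqr : s ^+ 2 = 2.

Lemma exprSS_of_quadratic (r : R) :
  r ^+ 2 = 2 * r + 1 -> forall n, r ^+ n.+2 = 2 * r ^+ n.+1 + r ^+ n.
Proof. by move=> r_root n; rewrite !exprS mulrA -expr2 r_root; ring. Qed.

Lemma a_closed_form n : (a n)%:~R * 2 = (1 + s) ^+ n + (1 - s) ^+ n.
Proof.
have rootP : (1 + s) ^+ 2 = 2 * (1 + s) + 1 by rewrite sqrrD s_sqr expr1n; ring.
have rootN : (1 - s) ^+ 2 = 2 * (1 - s) + 1 by rewrite sqrrB s_sqr expr1n; ring.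
elim/ltn_ind: n => -[|[|n]] IH.
- by rewrite mul1r !expr0.
- by rewrite mul1r !expr1; ring.
rewrite -[a n.+2]/(2 * a n.+1 + a n) intrD intrM mulrDl -mulrA !IH //.
by rewrite (exprSS_of_quadratic rootP) (exprSS_of_quadratic rootN); ring.
Qed.

End ClosedForm.

Lemma a_binomial_transform n :
  a n = \sum_(0 <= i < n.+1) 'C(n, i)%:R * (-1) ^+ i * 2 ^+ (n - i) * a i.
Proof.
pose s : algC := sqrtC 2.
have a_closed i : (a i)%:~R * 2 = (1 + s) ^+ i + (1 - s) ^+ i :> algC.
  by apply: a_closed_form; exact: sqrtCK.
apply: (@intr_inj algC); apply: (@mulIf algC 2); first by rewrite pnatr_eq0.
rewrite a_closed big_mkord (big_morph _ (intrD _) (mulr0z 1)) mulr_suml.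
under eq_bigr => i _ do
  rewrite intrM -[_ * 2]mulrA a_closed mulrDr !intrM intr_sign mulrz_nat rmorphXn rmorph_nat.
rewrite big_split /= !sum_binomial_signed.
by rewrite addrC; congr (_ ^+ n + _ ^+ n); ring.
Qed.

Theorem mainTheorem10 :
  (forall n : nat,
     a n = \sum_(0 <= i < n.+1) ('C(n, i))%:R * (-1) ^+ i * 2 ^+ (n - i) * a i)
  /\
  (forall n : nat, (1 <= n)%N ->
     \sum_(0 <= i < n) ('C(n, i))%:R * (-1) ^+ i * 2 ^+ (n - i) * a i
       = (if odd n then 2 * a n else 0)).
Proof.
split=> [|n _]; first exact: a_binomial_transform.
have := a_binomial_transform n.
rewrite big_nat_recr //= binn subnn expr0 mulr1 mul1r -signr_odd.
move=> /(canLR (addrK _)) <-.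
by case: (odd n); ring.
Qed.
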